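(* Let $0<a<1$ and, for each integer $n\ge0$, write $(T_a(z))^n=\sum_{m=0}^\infty a_{m,n}z^m$ for $z\in\mathbb D$. Then for every $\alpha>0$ there exists $\rho>0$ (depending on $a$ and $\alpha$) such that for all integers $m,n\ge0$: $$|a_{m,n}|\le e^{-\alpha(\rho n-m)}.$$
   Context: $T_a(z)=\frac{a+z}{1+\bar a z}$ for $a\in\mathbb D$, an automorphism of the unit disk $\mathbb D$. *)

From Stdlib Require Export Reals.
From Coquelicot Require Export Coquelicot.
Open Scope R_scope.

Definition T_aut (a z : Complex.C) : Complex.C :=
  Cdiv (Cplus a z) (Cplus (RtoC 1) (Cmult (Cconj a) z)).

Definition power_series_on_disk (c : nat -> Complex.C) (f : Complex.C -> Complex.C) : Prop :=
  forall z : Complex.C, Cmod z < 1 ->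
    is_series (fun m => Cmult (c m) (Cpow z m)) (f z).

From Stdlib Require Import Reals.
From Coquelicot Require Import Coquelicot.
Open Scope R_scope.
From Stdlib Require Import Lra Lia Psatz.

(* Fix [alpha > 0] and the radius [r = e^(-alpha)].  On the circle [|z| = r] the
   Möbius map satisfies [|T_a z| <= K := (a + r) / (1 + a r) < 1], so Cauchy's
   estimate applied to [T_a^n] gives [|a_{m,n}| r^m <= K^n], which is the claim
   with [rho = - ln K / alpha]. *)

Fixpoint csum (g : nat -> C) (N : nat) : C :=
  match N with O => RtoC 0 | S N' => Cplus (csum g N') (g N') end.

Lemma csum_ext (g h : nat -> C) (N : nat) :
  (forall j, (j < N)%nat -> g j = h j) -> csum g N = csum h N.
Proof.
  induction N as [|N IH]; intros H; simpl; auto.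
  rewrite IH, H; auto.
Qed.

Lemma csum_scal (x : C) (g : nat -> C) (N : nat) :
  csum (fun j => Cmult x (g j)) N = Cmult x (csum g N).
Proof. induction N as [|N IH]; simpl; [ring | rewrite IH; ring]. Qed.

Lemma csum_const_1 (N : nat) : csum (fun _ => RtoC 1) N = RtoC (INR N).
Proof.
  induction N as [|N IH]; simpl csum; [reflexivity|].
  rewrite IH, S_INR, <- RtoC_plus. reflexivity.
Qed.

Lemma Cmod_csum_le (g : nat -> C) (N : nat) (B : R) :
  (forall j, (j < N)%nat -> Cmod (g j) <= B) -> Cmod (csum g N) <= INR N * B.
Proof.
  induction N as [|N IH]; intros H; simpl csum.
  - rewrite Cmod_0. simpl. lra.
  - eapply Rle_trans; [apply Cmod_triangle|]. rewrite S_INR.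
    assert (Cmod (csum g N) <= INR N * B) by (apply IH; auto).
    assert (Cmod (g N) <= B) by auto. lra.
Qed.

Lemma csum_geom (u : C) (N : nat) :
  Cmult (Cminus u 1) (csum (fun j => Cpow u j) N) = Cminus (Cpow u N) 1.
Proof.
  induction N as [|N IH]; simpl csum; [simpl; ring|].
  rewrite Cmult_plus_distr_l, IH, Cpow_S. ring.
Qed.

Lemma csum_geom_root (u : C) (N : nat) :
  Cpow u N = RtoC 1 -> u <> RtoC 1 -> csum (fun j => Cpow u j) N = RtoC 0.
Proof.
  intros huN hu1.
  assert (hu : Cminus u 1 <> RtoC 0).
  { intro E. apply hu1. replace u with (Cplus (Cminus u 1) 1) by ring.
    rewrite E. ring. }
  pose proof (csum_geom u N) as E. rewrite huN in E.
  replace (Cminus 1 1) with (RtoC 0) in E by ring.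
  destruct (Ceq_dec (csum (fun j => Cpow u j) N) 0) as [Z|Z]; [exact Z|].
  exfalso. exact (Cmult_neq_0 _ _ hu Z E).
Qed.

Lemma is_series_C0 : is_series (fun _ : nat => RtoC 0) (RtoC 0).
Proof.
  apply filterlim_ext with (fun _ => RtoC 0); [|apply filterlim_const].
  intro n. symmetry. exact (sum_n_m_const_zero 0 n).
Qed.

Lemma is_series_csum (A : nat -> nat -> C) (L : nat -> C) (N : nat) :
  (forall j, (j < N)%nat -> is_series (A j) (L j)) ->
  is_series (fun k => csum (fun j => A j k) N) (csum L N).
Proof.
  induction N as [|N IH]; intros H; simpl csum; [apply is_series_C0|].
  apply (is_series_plus (fun k => csum (fun j => A j k) N) (A N)); auto.
Qed.

Lemma is_series_mulr (a : nat -> C) (l u : C) :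
  is_series a l -> is_series (fun k => Cmult (a k) u) (Cmult l u).
Proof.
  intro H. apply (is_series_scal u) in H.
  replace (Cmult l u) with (scal u l) by (change (Cmult u l = Cmult l u); ring).
  eapply is_series_ext; [|exact H].
  intro n. change (Cmult u (a n) = Cmult (a n) u). ring.
Qed.

Lemma is_series_single (m : nat) (x : C) :
  is_series (fun k => if Nat.eqb k m then x else RtoC 0) x.
Proof.
  apply (filterlim_ext_loc (fun _ => x)); [|apply filterlim_const].
  exists m. intros n hn. induction n as [|n IH].
  - rewrite sum_O. replace m with 0%nat by lia. reflexivity.
  - rewrite sum_Sn. destruct (Nat.eq_dec (S n) m) as [e|e].
    + rewrite (proj2 (Nat.eqb_eq _ _) e), (sum_n_ext_loc _ (fun _ => zero)).
      * unfold sum_n. rewrite sum_n_m_const_zero, plus_zero_l. reflexivity.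
      * intros k hk. destruct (Nat.eqb_spec k m); [lia|reflexivity].
    + rewrite (proj2 (Nat.eqb_neq _ _) e), <- IH by lia.
      symmetry. exact (Cplus_0_r x).
Qed.

Lemma series_terms_bounded (a : nat -> C) (l : C) :
  is_series a l -> exists B, forall k, Cmod (a k) <= B.
Proof.
  intro H. destruct (filterlim_bounded (sum_n a)) as [M HM]; [exists l; exact H|].
  exists (2 * M). intro k.
  assert (hM0 : 0 <= M)
    by (eapply Rle_trans; [apply (norm_ge_0 (sum_n a 0))|apply (HM 0%nat)]).
  destruct k as [|k].
  - pose proof (HM 0%nat) as H0. rewrite sum_O in H0.
    change (Cmod (a 0%nat) <= M) in H0. lra.
  - assert (E : a (S k) = Cminus (sum_n a (S k)) (sum_n a k)).
    { rewrite sum_Sn.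
      change (a (S k) = Cminus (Cplus (sum_n a k) (a (S k))) (sum_n a k)). ring. }
    rewrite E. eapply Rle_trans; [apply Cmod_triangle|]. rewrite Cmod_opp.
    pose proof (HM (S k)). pose proof (HM k).
    change (norm (sum_n a (S k)) + norm (sum_n a k) <= 2 * M). lra.
Qed.

Lemma norm_series_le {K : AbsRing} {V : NormedModule K} (a : nat -> V) (b : nat -> R)
  (la : V) (lb : R) :
  is_series a la -> is_series b lb -> (forall n, norm (a n) <= b n) -> norm la <= lb.
Proof.
  intros Ha Hb Hab.
  assert (Hn : is_lim_seq (fun n => norm (sum_n a n)) (norm la)).
  { apply (filterlim_comp _ _ _ (sum_n a) norm _ (locally la)); [exact Ha|apply filterlim_norm]. }
  assert (Hle : forall n, norm (sum_n a n) <= sum_n b n).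
  { intro n. eapply Rle_trans; [apply norm_sum_n_m|]. apply sum_n_m_le. exact Hab. }
  exact (is_lim_seq_le _ _ (norm la) lb Hle Hn Hb).
Qed.

Definition cis (x : R) : C := (cos x, sin x).

Lemma cis_pow (x : R) (j : nat) : Cpow (cis x) j = cis (INR j * x).
Proof.
  induction j as [|j IH].
  - unfold cis; simpl INR. rewrite Rmult_0_l, cos_0, sin_0. reflexivity.
  - rewrite Cpow_S, IH, S_INR. unfold cis, Cmult; simpl.
    replace ((INR j + 1) * x) with (x + INR j * x) by ring.
    rewrite cos_plus, sin_plus. f_equal; ring.
Qed.

Lemma Cmod_cis (x : R) : Cmod (cis x) = 1.
Proof.
  unfold Cmod, cis; simpl fst; simpl snd.
  replace (cos x ^ 2 + sin x ^ 2) with 1; [apply sqrt_1|].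
  rewrite <- (sin2_cos2 x). unfold Rsqr. ring.
Qed.

Lemma cos_neq_1 (x : R) : 0 < x -> x < 2 * PI -> cos x <> 1.
Proof.
  intros hx0 hx1 H.
  assert (Hs : sin x = 0).
  { pose proof (sin2_cos2 x) as E. rewrite H in E. unfold Rsqr in E. nra. }
  destruct (sin_eq_O_2PI_0 x) as [E|[E|E]]; try lra.
  subst. rewrite cos_PI in H. lra.
Qed.

Definition root_unity (N : nat) : C := cis (2 * PI / INR N).

Lemma Cmod_root_unity_pow (N j : nat) : Cmod (Cpow (root_unity N) j) = 1.
Proof. unfold root_unity. rewrite cis_pow. apply Cmod_cis. Qed.

Lemma root_unity_pow_N (N : nat) : (0 < N)%nat -> Cpow (root_unity N) N = RtoC 1.
Proof.
  intro hN. unfold root_unity. rewrite cis_pow.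
  assert (0 < INR N) by (apply lt_0_INR; lia).
  replace (INR N * (2 * PI / INR N)) with (2 * PI) by (field; lra).
  unfold cis. rewrite cos_2PI, sin_2PI. reflexivity.
Qed.

Lemma root_unity_pow_neq_1 (N s : nat) :
  (0 < s)%nat -> (s < N)%nat -> Cpow (root_unity N) s <> RtoC 1.
Proof.
  intros hs hsN H. unfold root_unity in H. rewrite cis_pow in H.
  apply (f_equal fst) in H. simpl in H. revert H.
  assert (0 < INR s) by (apply lt_0_INR; lia).
  assert (INR s < INR N) by (apply lt_INR; lia).
  pose proof PI_RGT_0.
  replace (INR s * (2 * PI / INR N)) with (2 * PI * (INR s / INR N)) by (field; lra).
  assert (0 < INR s / INR N < 1).
  { split; [apply Rdiv_lt_0_compat; lra|].
    apply (Rmult_lt_reg_r (INR N)); [lra|]. field_simplify; lra. }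
  apply cos_neq_1; nra.
Qed.

Definition root_unity_sum (N q : nat) : C :=
  csum (fun j => Cpow (root_unity N) (q * j)) N.

Lemma root_unity_sum_multiple (N q : nat) : (0 < N)%nat -> (q mod N = 0)%nat ->
  root_unity_sum N q = RtoC (INR N).
Proof.
  intros hN hq. unfold root_unity_sum. rewrite <- csum_const_1. apply csum_ext. intros j _.
  rewrite (Nat.div_mod_eq q N), hq, Nat.add_0_r, <- !Nat.mul_assoc, Cpow_mult_r,
    root_unity_pow_N by exact hN.
  apply Cpow_1_l.
Qed.

Lemma root_unity_sum_other (N q : nat) : (0 < N)%nat -> (q mod N <> 0)%nat ->
  root_unity_sum N q = RtoC 0.
Proof.
  intros hN hq.
  assert (Hw : Cpow (root_unity N) q = Cpow (root_unity N) (q mod N)).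
  { rewrite (Nat.div_mod_eq q N) at 1.
    rewrite Cpow_add_r, Cpow_mult_r, root_unity_pow_N, Cpow_1_l by exact hN. ring. }
  unfold root_unity_sum.
  rewrite (csum_ext _ (fun j => Cpow (Cpow (root_unity N) q) j)).
  2:{ intros j _. apply Cpow_mult_r. }
  apply csum_geom_root.
  - rewrite <- Cpow_mult_r, Nat.mul_comm, Cpow_mult_r, root_unity_pow_N by exact hN.
    apply Cpow_1_l.
  - rewrite Hw. apply root_unity_pow_neq_1; [lia|]. apply Nat.mod_upper_bound. lia.
Qed.

Lemma Cmod_root_unity_sum_le (N q : nat) : Cmod (root_unity_sum N q) <= INR N.
Proof.
  rewrite <- (Rmult_1_r (INR N)). apply Cmod_csum_le.
  intros j _. rewrite Cmod_root_unity_pow. lra.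
Qed.

Lemma pow_le_decr (t : R) (N k : nat) : 0 <= t <= 1 -> (N <= k)%nat -> t ^ k <= t ^ N.
Proof.
  intros ht hk. replace k with (N + (k - N))%nat by lia. rewrite pow_add.
  pose proof (pow_le t N (proj1 ht)).
  assert (t ^ (k - N) <= 1) by (rewrite <- (pow1 (k - N)); apply pow_incr; lra).
  nra.
Qed.

Section CauchyEstimate.

Variables (c : nat -> C) (f : C -> C).
Hypothesis hf : power_series_on_disk c f.
Variable r : R.
Hypotheses (hr0 : 0 < r) (hr1 : r < 1).

Lemma twisted_circle_average (N p : nat) :
  is_series
    (fun k => Cmult (Cmult (c k) (Cpow (RtoC r) k)) (root_unity_sum N (k + p)))
    (csum (fun j => Cmult (f (Cmult (RtoC r) (Cpow (root_unity N) j)))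
                          (Cpow (root_unity N) (j * p))) N).
Proof.
  set (w := root_unity N).
  eapply is_series_ext; [|apply (is_series_csum
    (fun j k => Cmult (Cmult (c k) (Cpow (Cmult (RtoC r) (Cpow w j)) k)) (Cpow w (j * p))))].
  - intro k. unfold root_unity_sum. fold w. rewrite <- csum_scal. apply csum_ext. intros j _.
    rewrite Cpow_mult_l, <- !Cpow_mult_r.
    replace ((k + p) * j)%nat with (j * k + j * p)%nat by ring.
    rewrite Cpow_add_r. ring.
  - intros j _. apply is_series_mulr. apply hf. unfold w.
    rewrite Cmod_mult, Cmod_R, Rabs_pos_eq, Cmod_root_unity_pow by lra. lra.
Qed.

(* With the twist [p = N - m], the twisted average is [N c_m r^m] plus the
   aliased coefficients [c k r^k] with [k = m mod N], [k <> m]; these are the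
   terms of the following series. *)
Definition aliased_term (m N k : nat) : C :=
  Cminus (Cmult (Cmult (c k) (Cpow (RtoC r) k)) (root_unity_sum N (k + (N - m))))
         (if Nat.eqb k m then Cmult (Cmult (c m) (Cpow (RtoC r) m)) (RtoC (INR N))
          else RtoC 0).

Lemma aliased_term_low (m N k : nat) :
  (m < N)%nat -> (k < m + N)%nat -> aliased_term m N k = RtoC 0.
Proof.
  intros hmN hk. unfold aliased_term. destruct (Nat.eqb_spec k m) as [->|hkm].
  - replace (m + (N - m))%nat with (1 * N)%nat by lia.
    rewrite root_unity_sum_multiple by (try rewrite Nat.Div0.mod_mul; lia). ring.
  - rewrite root_unity_sum_other; [ring|lia|].
    intros Hdiv. apply Nat.Div0.mod_divides in Hdiv as [q Hq].
    destruct q as [|[|q]]; nia.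
Qed.

Lemma aliased_term_bound (m N : nat) (B t : R) :
  (m < N)%nat -> 0 <= t < 1 -> 0 <= B ->
  (forall k, Cmod (c k) * r ^ k <= B * t ^ (2 * k)) ->
  forall k, Cmod (aliased_term m N k) <= INR N * B * t ^ N * t ^ k.
Proof.
  intros hmN ht hB0 hB k.
  assert (hN : 0 <= INR N) by apply pos_INR.
  pose proof (pow_le t N (proj1 ht)). pose proof (pow_le t k (proj1 ht)).
  destruct (Nat.lt_ge_cases k (m + N)) as [hk|hk].
  - rewrite aliased_term_low, Cmod_0 by assumption.
    apply Rmult_le_pos; [apply Rmult_le_pos; [apply Rmult_le_pos|]|]; lra.
  - unfold aliased_term. rewrite (proj2 (Nat.eqb_neq k m)) by lia.
    replace (Cminus _ (RtoC 0)) with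
      (Cmult (Cmult (c k) (Cpow (RtoC r) k)) (root_unity_sum N (k + (N - m)))) by ring.
    rewrite !Cmod_mult, Cmod_pow, Cmod_R, Rabs_pos_eq by lra.
    pose proof (Cmod_root_unity_sum_le N (k + (N - m))) as HG.
    pose proof (Cmod_ge_0 (root_unity_sum N (k + (N - m)))).
    assert (Hck : Cmod (c k) * r ^ k <= B * (t ^ N * t ^ k)).
    { eapply Rle_trans; [apply hB|].
      replace (t ^ (2 * k)) with (t ^ k * t ^ k) by (rewrite <- pow_add; f_equal; lia).
      apply Rmult_le_compat_l; [lra|]. apply Rmult_le_compat_r; [lra|].
      apply pow_le_decr; [lra|lia]. }
    assert (0 <= Cmod (c k) * r ^ k)
      by (apply Rmult_le_pos; [apply Cmod_ge_0|apply pow_le; lra]).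
    nra.
Qed.

Variable M : R.
Hypothesis hM : forall z, Cmod z = r -> Cmod (f z) <= M.

(* Discrete Cauchy estimate: the twisted average [T] has modulus at most
   [N M], and differs from [N c_m r^m] by the sum of the aliased terms, which
   is at most [N B t^N / (1 - t)]. *)
Lemma discrete_cauchy_estimate (m N : nat) (B t : R) :
  (m < N)%nat -> 0 <= t < 1 ->
  (forall k, Cmod (c k) * r ^ k <= B * t ^ (2 * k)) ->
  Cmod (c m) * r ^ m <= M + B * t ^ N / (1 - t).
Proof.
  intros hmN ht hB.
  assert (hN : 0 < INR N) by (apply lt_0_INR; lia).
  assert (hB0 : 0 <= B).
  { specialize (hB 0%nat). simpl in hB. pose proof (Cmod_ge_0 (c 0%nat)). lra. }
  set (w := root_unity N).
  set (T := csum (fun j => Cmult (f (Cmult (RtoC r) (Cpow w j))) (Cpow w (j * (N - m)))) N).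
  set (X := Cmult (Cmult (c m) (Cpow (RtoC r) m)) (RtoC (INR N))).
  assert (HT : is_series (aliased_term m N) (Cminus T X)).
  { apply (is_series_minus _ _ T X); [apply twisted_circle_average|apply is_series_single]. }
  assert (HTM : Cmod T <= INR N * M).
  { apply Cmod_csum_le. intros j _. unfold w.
    rewrite Cmod_mult, Cmod_root_unity_pow, Rmult_1_r.
    apply hM. rewrite Cmod_mult, Cmod_R, Rabs_pos_eq, Cmod_root_unity_pow by lra. lra. }
  assert (Hgeom : is_series (fun k => INR N * B * t ^ N * t ^ k)
                            (INR N * B * t ^ N * / (1 - t))).
  { apply (is_series_scal (K := R_AbsRing) (V := R_NormedModule)).
    apply is_series_geom. rewrite Rabs_pos_eq; lra. }
  assert (Htail : Cmod (Cminus T X) <= INR N * B * t ^ N * / (1 - t))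
    by exact (norm_series_le _ _ _ _ HT Hgeom (aliased_term_bound m N B t hmN ht hB0 hB)).
  assert (HX : Cmod X = INR N * (Cmod (c m) * r ^ m)).
  { unfold X. rewrite !Cmod_mult, Cmod_pow, !Cmod_R, !Rabs_pos_eq by lra. ring. }
  assert (Htri : Cmod X <= Cmod T + Cmod (Cminus T X)).
  { replace X with (Cplus T (Copp (Cminus T X))) at 1 by ring.
    rewrite <- (Cmod_opp (Cminus T X)). apply Cmod_triangle. }
  apply (Rmult_le_reg_l (INR N)); [exact hN|].
  replace (INR N * (M + B * t ^ N / (1 - t)))
    with (INR N * M + INR N * B * t ^ N * / (1 - t)) by (field; lra).
  lra.
Qed.

(* Cauchy's estimate [|c m| r^m <= max_{|z| = r} |f z|], obtained from the
   discrete one by letting [N] grow; the geometric majorant comes from the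
   convergence of the Taylor series at the larger radius [sqrt r]. *)
Lemma cauchy_estimate (m : nat) : Cmod (c m) * r ^ m <= M.
Proof.
  set (s := sqrt r). set (t := sqrt s).
  assert (hs : 0 < s < 1).
  { split; [apply sqrt_lt_R0; lra|]. rewrite <- sqrt_1. apply sqrt_lt_1; lra. }
  assert (ht : 0 < t < 1).
  { split; [apply sqrt_lt_R0; lra|]. rewrite <- sqrt_1. apply sqrt_lt_1; lra. }
  assert (hss : s * s = r) by (apply sqrt_sqrt; lra).
  assert (htt : t * t = s) by (apply sqrt_sqrt; lra).
  destruct (series_terms_bounded _ _ (hf (RtoC s) ltac:(rewrite Cmod_R, Rabs_pos_eq; lra)))
    as [B HB].
  assert (hB0 : 0 <= B) by (eapply Rle_trans; [apply Cmod_ge_0|apply (HB 0%nat)]).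
  assert (hmaj : forall k, Cmod (c k) * r ^ k <= B * t ^ (2 * k)).
  { intro k. specialize (HB k).
    rewrite Cmod_mult, Cmod_pow, Cmod_R, Rabs_pos_eq in HB by lra.
    replace (t ^ (2 * k)) with (s ^ k) by (rewrite pow_mult, <- htt; f_equal; ring).
    rewrite <- hss, Rpow_mult_distr, <- Rmult_assoc.
    apply Rmult_le_compat_r; [apply pow_le|]; lra. }
  apply Rle_plus_epsilon. intros eps heps.
  destruct (pow_lt_1_zero t ltac:(rewrite Rabs_pos_eq; lra) (eps * (1 - t) / (B + 1)))
    as [N0 HN0].
  { apply Rdiv_lt_0_compat; nra. }
  specialize (HN0 (S (N0 + m)) ltac:(lia)). rewrite Rabs_pos_eq in HN0 by (apply pow_le; lra).
  eapply Rle_trans.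
  { apply (discrete_cauchy_estimate m (S (N0 + m)) B t); [lia|lra|exact hmaj]. }
  apply Rplus_le_compat_l.
  pose proof (pow_le t (S (N0 + m)) ltac:(lra)).
  assert (B * t ^ S (N0 + m) < eps * (1 - t)).
  { apply (Rmult_lt_compat_l (B + 1)) in HN0; [|lra].
    replace ((B + 1) * (eps * (1 - t) / (B + 1))) with (eps * (1 - t)) in HN0
      by (field; lra).
    nra. }
  apply Rle_div_l; lra.
Qed.

End CauchyEstimate.

(* On the circle [|z| = r], [|T_a z| <= (a + r) / (1 + a r)]: writing
   [z = x + i y], both squared moduli are explicit and
   [(a + r)^2 |1 + a z|^2 - (1 + a r)^2 |a + z|^2 = 2a (r - x)(1 - a^2)(1 - r^2)]. *)
Lemma T_aut_circle_bound (a r : R) (z : C) : 0 <= a < 1 -> 0 <= r < 1 -> Cmod z = r ->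
  Cmod (T_aut (RtoC a) z) <= (a + r) / (1 + a * r).
Proof.
  intros ha hr hz. destruct z as [x y].
  unfold Cmod in hz; simpl fst in hz; simpl snd in hz.
  assert (hxy : x ^ 2 + y ^ 2 = r ^ 2) by (rewrite <- hz, pow2_sqrt; nra).
  assert (hx : - r <= x <= r) by nra.
  set (A := a ^ 2 + 2 * a * x + r ^ 2).
  set (B := 1 + 2 * a * x + a ^ 2 * r ^ 2).
  assert (HB : 0 < B).
  { assert (0 <= a * (x + r)) by nra.
    assert (0 < (1 - a * r) ^ 2) by (apply pow_lt; nra).
    unfold B. nra. }
  assert (HnA : Cmod (Cplus (RtoC a) (x, y)) = sqrt A).
  { unfold Cmod. f_equal. simpl. unfold A. rewrite <- hxy. ring. }
  assert (HdB : Cmod (Cplus (RtoC 1) (Cmult (Cconj (RtoC a)) (x, y))) = sqrt B).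
  { unfold Cmod. f_equal. simpl. unfold B. rewrite <- hxy. ring. }
  assert (Hden : Cplus (RtoC 1) (Cmult (Cconj (RtoC a)) (x, y)) <> RtoC 0).
  { intro E. rewrite E, Cmod_0 in HdB. pose proof (sqrt_lt_R0 B HB). lra. }
  unfold T_aut, Cdiv. rewrite Cmod_mult, Cmod_inv, HdB, HnA by exact Hden.
  set (K := (a + r) / (1 + a * r)).
  assert (HK : 0 <= K) by (unfold K; apply Rdiv_le_0_compat; nra).
  assert (HAB : A <= K ^ 2 * B).
  { unfold K. replace (((a + r) / (1 + a * r)) ^ 2 * B)
      with ((a + r) ^ 2 * B / (1 + a * r) ^ 2) by (field; nra).
    apply Rle_div_r; [nra|].
    assert (E : (a + r) ^ 2 * B - A * (1 + a * r) ^ 2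
              = 2 * a * (r - x) * ((1 - a ^ 2) * (1 - r ^ 2))) by (unfold A, B; ring).
    assert (0 <= 2 * a * (r - x) * ((1 - a ^ 2) * (1 - r ^ 2))).
    { apply Rmult_le_pos; [nra|apply Rmult_le_pos; nra]. }
    lra. }
  assert (HsB : 0 < sqrt B) by (apply sqrt_lt_R0; exact HB).
  assert (sqrt A <= K * sqrt B).
  { rewrite <- (sqrt_pow2 K HK), <- sqrt_mult by nra. apply sqrt_le_1_alt. exact HAB. }
  rewrite <- Rdiv_def. apply Rle_div_l; [exact HsB|exact H].
Qed.

Lemma mobius_radius_lt_1 (a r : R) : 0 <= a < 1 -> 0 <= r < 1 -> (a + r) / (1 + a * r) < 1.
Proof. intros ha hr. apply Rlt_div_l; nra. Qed.

Lemma mobius_power_coef_bound (a : R) (coef : nat -> nat -> C) :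
  0 <= a < 1 ->
  (forall n, power_series_on_disk (fun m => coef m n) (fun z => Cpow (T_aut (RtoC a) z) n)) ->
  forall r m n, 0 < r < 1 -> Cmod (coef m n) * r ^ m <= ((a + r) / (1 + a * r)) ^ n.
Proof.
  intros ha hcoef r m n hr.
  apply (cauchy_estimate _ _ (hcoef n) r ltac:(lra) ltac:(lra)).
  intros z hz. rewrite Cmod_pow. apply pow_incr.
  split; [apply Cmod_ge_0|apply T_aut_circle_bound; lra].
Qed.

Lemma pow_exp_ln (x : R) (n : nat) : 0 < x -> x ^ n = exp (INR n * ln x).
Proof. intro hx. rewrite <- Rpower_pow by exact hx. reflexivity. Qed.

Theorem mainTheorem8 (a : R) (ha0 : 0 < a) (ha1 : a < 1)
  (coef : nat -> nat -> Complex.C)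
  (hcoef : forall n : nat,
     power_series_on_disk (fun m => coef m n)
       (fun z => Cpow (T_aut (RtoC a) z) n)) :
  forall alpha : R, 0 < alpha ->
  exists rho : R, 0 < rho /\
    forall m n : nat,
      Cmod (coef m n) <= exp (- alpha * (rho * INR n - INR m)).
Proof.
  intros alpha halpha.
  set (r := exp (- alpha)).
  assert (hr : 0 < r < 1).
  { split; [apply exp_pos|]. rewrite <- exp_0. apply exp_increasing. lra. }
  set (K := (a + r) / (1 + a * r)).
  assert (hK : 0 < K < 1).
  { split; [apply Rdiv_lt_0_compat; nra|apply mobius_radius_lt_1; lra]. }
  assert (hlnK : ln K < 0) by (rewrite <- ln_1; apply ln_increasing; lra).
  exists (- ln K / alpha). split; [apply Rdiv_lt_0_compat; lra|].
  intros m n.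
  pose proof (mobius_power_coef_bound a coef ltac:(lra) hcoef r m n hr) as Hcoef.
  fold K in Hcoef.
  assert (hlnr : ln r = - alpha) by apply ln_exp.
  rewrite (pow_exp_ln r m), (pow_exp_ln K n), hlnr in Hcoef by lra.
  replace (- alpha * (- ln K / alpha * INR n - INR m))
    with (INR n * ln K + - (INR m * - alpha)) by (field; lra).
  rewrite exp_plus, exp_Ropp, <- Rdiv_def.
  apply Rle_div_r; [apply exp_pos|exact Hcoef].
Qed.
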